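(* Let $\mathcal{C}=\{C_h\}$ be a channel over $\Sigma$, $h\in\Sigma^*$, $\lambda\ge1$ and $m=m_1\cdots m_\lambda\in\{0,1\}^\lambda$. If $f$ is drawn uniformly at random from the set of all Boolean functions on $\{1,\dots,\lambda\}\times\Sigma$, then $P^f_h(m)$ has exactly the same distribution as $c_1c_2\cdots c_\lambda$ where, successively, $c_i\sim C_{h\circ c_1\circ\cdots\circ c_{i-1}}$ independently.
   Context: $\Sigma$ is a finite alphabet; a channel is a family $\mathcal{C}=\{C_h\}_{h\in\Sigma^*}$ of probability distributions on $\Sigma$; $\circ$ denotes concatenation. For $g:\Sigma\to\{0,1\}$, $h\in\Sigma^*$, $b\in\{0,1\}$, the procedure $\mathtt{rejsam}^g_h(b)$ draws $c_1\sim C_h$; if $g(c_1)=b$ it outputs $c_1$; otherwise it draws $c_2\sim C_h$ independently and outputs $c_2$. For $f:\{1,\dots,\lambda\}\times\Sigma\to\{0,1\}$ write $f_i(\sigma)=f(i,\sigma)$. The procedure $P^f_h:\{0,1\}^\lambda\to\Sigma^\lambda$ on input $m=m_1\cdots m_\lambda$ does: for $i=1,\dots,\lambda$, set $c_i=\mathtt{rejsam}^{f_i}_h(m_i)$ and update $h\leftarrow h\circ c_i$; output $c_1\cdots c_\lambda$. *)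

From HB Require Import structures.
From mathcomp Require Import all_boot all_order all_algebra.
Set Implicit Arguments. Unset Strict Implicit. Unset Printing Implicit Defensive.
Import Order.TTheory GRing.Theory Num.Theory.
Local Open Scope ring_scope.

(* A channel over a finite alphabet S: C h is a probability mass function on S
   for every history h : seq S (seq S plays the role of the set of finite words over S). *)
Definition is_channel (R : realFieldType) (S : finType) (C : seq S -> S -> R) :=
  (forall h s, 0 <= C h s) /\ (forall h, \sum_(s : S) C h s = 1).

(* Probability that rejsam^g_h(b) outputs s:
   draw c1 ~ C_h; if g c1 = b output c1, else draw c2 ~ C_h and output c2. *)
Definition rejsam_prob (R : realFieldType) (S : finType) (C : seq S -> S -> R)
    (g : S -> bool) (h : seq S) (b : bool) (s : S) : R :=
  \sum_(c1 : S) C h c1 *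
     (if g c1 == b then (c1 == s)%:R else \sum_(c2 : S) C h c2 * (c2 == s)%:R).

(* f_i for a 0-based index i (i.e. the paper's f_{i+1}); f : [lambda] x S -> {0,1}. *)
Definition fi (S : finType) (lam : nat) (f : {ffun 'I_lam * S -> bool})
    (i : nat) (s : S) : bool :=
  odflt false (omap (fun j : 'I_lam => f (j, s)) (insub i)).

(* Probability that the procedure P^f, run from history h on the remaining
   message bits ms starting at (0-based) index i, outputs the word out. *)
Fixpoint P_prob (R : realFieldType) (S : finType) (C : seq S -> S -> R)
    (lam : nat) (f : {ffun 'I_lam * S -> bool})
    (h : seq S) (ms : seq bool) (i : nat) (out : seq S) : R :=
  match ms, out with
  | [::], [::] => 1
  | b :: ms', c :: out' =>
      rejsam_prob C (fi f i) h b c * P_prob C f (rcons h c) ms' i.+1 out'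
  | _, _ => 0
  end.

Fixpoint ideal_prob (R : realFieldType) (S : finType) (C : seq S -> S -> R)
    (h : seq S) (n : nat) (out : seq S) : R :=
  match n, out with
  | 0, [::] => 1
  | n'.+1, c :: out' => C h c * ideal_prob C (rcons h c) n' out'
  | _, _ => 0
  end.

Definition P_uniform_prob (R : realFieldType) (S : finType) (C : seq S -> S -> R)
    (lam : nat) (h : seq S) (m : lam.-tuple bool) (out : seq S) : R :=
  (#|{ffun 'I_lam * S -> bool}|%:R)^-1 *
  \sum_(f : {ffun 'I_lam * S -> bool}) P_prob C f h m 0 out.

From HB Require Import structures.
From mathcomp Require Import all_boot all_order all_algebra.
Import Order.TTheory GRing.Theory Num.Theory.
Local Open Scope ring_scope.

(* Summing the output probability of P^f over all Boolean
   functions f, we peel off the first step of the procedure.  Flipping the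
   i-th slice of f (f(i,.) -> ~~ f(i,.)) is an involution of the function
   space that leaves the later slices, hence the rest of the procedure,
   untouched.  Pairing each f with its flip therefore averages the first step
   over g and ~~ g, and for every g the two rejection samplers together output
   c with probability exactly 2 C_h(c): whichever way c1 is tested, one of the
   two runs keeps c1 and the other resamples.  So the first step contributes
   the factor C_h(c), and induction on the message (lemma sum_P_prob) gives
   #|functions| times the ideal probability; dividing by the number of
   functions yields the theorem. *)

Section UniformKey.
Variables (R : realFieldType) (S : finType) (C : seq S -> S -> R) (lam : nat).
(* Only the normalization of the channel matters, not its nonnegativity. *)
Hypothesis C_sum1 : forall h, \sum_(s : S) C h s = 1.

Local Notation keys := {ffun 'I_lam * S -> bool}.

Definition flip_slice (i : nat) (f : keys) : keys :=
  [ffun p : 'I_lam * S => if val p.1 == i then ~~ f p else f p].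

Lemma flip_sliceK i : involutive (flip_slice i).
Proof.
move=> f; apply/ffunP => p; rewrite !ffunE.
by case: (val p.1 == i); rewrite ?negbK.
Qed.

Lemma fi_flip_slice i f k s : (i < lam)%N ->
  fi (flip_slice i f) k s = if k == i then ~~ fi f k s else fi f k s.
Proof.
move=> lt_i_lam; rewrite /fi; case: insubP => [j _ val_j | k_out] /=.
  by rewrite ffunE /= val_j.
by case: eqP => // eq_ki; rewrite eq_ki lt_i_lam in k_out.
Qed.

Lemma P_prob_later_slices (f f' : keys) ms h i out :
  (forall j s, (i <= j)%N -> fi f j s = fi f' j s) ->
  P_prob C f h ms i out = P_prob C f' h ms i out.
Proof.
elim: ms h i out => [|b ms IH] h i [|c out] eq_ff' //=.
rewrite (IH _ _ _ (fun j s le_ij => eq_ff' j s (ltnW le_ij))).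
congr (_ * _); apply: eq_bigr => c1 _.
by rewrite eq_ff'.
Qed.

Lemma eq_rejsam_prob (g g' : S -> bool) h b c : g =1 g' ->
  rejsam_prob C g h b c = rejsam_prob C g' h b c.
Proof. by move=> eq_gg'; apply: eq_bigr => c1 _; rewrite eq_gg'. Qed.

Lemma sum_mul_indicator h c : \sum_(c1 : S) C h c1 * (c1 == c)%:R = C h c.
Proof.
rewrite (bigD1 c) //= eqxx mulr1 big1 ?addr0 // => c1 /negbTE ->.
by rewrite mulr0.
Qed.

Lemma rejsam_prob_negate_sum (g : S -> bool) h b c :
  rejsam_prob C g h b c + rejsam_prob C (fun s => ~~ g s) h b c = 2 * C h c.
Proof.
rewrite /rejsam_prob -big_split /=.
rewrite (eq_bigr (fun c1 => C h c1 * (c1 == c)%:R + C h c1 * C h c)).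
  by rewrite big_split /= sum_mul_indicator -big_distrl /= C_sum1 mul1r mulrDl mul1r.
move=> c1 _; rewrite sum_mul_indicator.
by case: (g c1); case: b; rewrite /= addrC.
Qed.

Lemma sum_first_step i b ms h c out : (i < lam)%N ->
  \sum_(f : keys) rejsam_prob C (fi f i) h b c * P_prob C f (rcons h c) ms i.+1 out
  = C h c * \sum_(f : keys) P_prob C f (rcons h c) ms i.+1 out.
Proof.
move=> lt_i_lam.
set F := fun f : keys =>
  rejsam_prob C (fi f i) h b c * P_prob C f (rcons h c) ms i.+1 out.
have sum_flip : \sum_f F f = \sum_f F (flip_slice i f).
  exact: (reindex_inj (inv_inj (flip_sliceK i))).
(* A key and its flip share all later slices and have opposite slice i. *)
have pair_sum f : F f + F (flip_slice i f)
    = 2 * C h c * P_prob C f (rcons h c) ms i.+1 out.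
  rewrite /F -[in X in _ + X](@P_prob_later_slices f); last first.
    by move=> j s lt_ij; rewrite fi_flip_slice // (gtn_eqF lt_ij).
  rewrite -mulrDl (@eq_rejsam_prob (fi (flip_slice i f) i) (fun s => ~~ fi f i s)).
    by rewrite (rejsam_prob_negate_sum (fi f i)).
  by move=> s; rewrite fi_flip_slice // eqxx.
have double : 2 * \sum_f F f
    = 2 * (C h c * \sum_(f : keys) P_prob C f (rcons h c) ms i.+1 out).
  rewrite mulr_natl mulr2n {2}sum_flip -big_split /= mulrA mulr_sumr.
  by apply: eq_bigr => f _; rewrite pair_sum.
by apply: (mulfI _ double); rewrite pnatr_eq0.
Qed.

Lemma sum_P_prob ms h i out : (i + size ms <= lam)%N ->
  \sum_(f : keys) P_prob C f h ms i out = #|keys|%:R * ideal_prob C h (size ms) out.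
Proof.
elim: ms h i out => [|b ms IH] h i [|c out] fits /=.
- by rewrite sumr_const mulr1.
- by rewrite big1 ?mulr0.
- by rewrite big1 ?mulr0.
rewrite sum_first_step; last by rewrite -addn1 (leq_trans _ fits) ?leq_add2l.
by rewrite IH ?addSn -?addnS // mulrCA.
Qed.

End UniformKey.

Theorem mainTheorem5 (R : realFieldType) (S : finType) (C : seq S -> S -> R)
    (HC : is_channel C) (h : seq S) (lam : nat) (Hlam : (1 <= lam)%N)
    (m : lam.-tuple bool) :
  forall out : seq S, P_uniform_prob C h m out = ideal_prob C h lam out.
Proof.
move=> out; have keys_gt0 : (0 < #|{ffun 'I_lam * S -> bool}|)%N.
  by rewrite card_ffun card_bool expn_gt0.
rewrite /P_uniform_prob (@sum_P_prob R S C lam (proj2 HC)) ?size_tuple //.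
by rewrite mulrA mulVf ?mul1r // pnatr_eq0 -lt0n.
Qed.
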